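(* Let $\Phi$ be an automorphism of $\mathcal C$. (i) $\Phi$ is potential-inner if and only if $\Phi(A_0)$ is isomorphic to $A_0$. (ii) Suppose $\Phi$ is potential-inner, witnessed by bijections $s_A:A\to\Phi(A)$ (one for each object $A$ of $\mathcal C$) with $\Phi(\mu)=s_B\circ\mu\circ s_A^{-1}$ for every morphism $\mu:A\to B$ of $\mathcal C$. Let $F$ be an object of $\mathcal C$ which is a free $\mathcal V$-algebra with basis $X$. Then $\Phi(F)$ is isomorphic to $F$. More precisely, the unique homomorphism $\sigma:F\to\Phi(F)$ with $\sigma(x)=s_F(x)$ for all $x\in X$ is an isomorphism; in particular $s_F(X)$ is a basis (free generating set) of $\Phi(F)$.
   Context: Let $\mathcal V$ be a variety of (one-sorted) universal algebras, and let $\Theta(\mathcal V)$ be the category of all algebras in $\mathcal V$ with all homomorphisms. Let $\mathcal C$ be a full subcategory of $\Theta(\mathcal V)$ which contains a free $\mathcal V$-algebra $A_0$ on a single free generator $x_0$. For an object $A$ of $\mathcal C$ and $a\in A$, let $\alpha^A_a:A_0\to A$ be the unique homomorphism with $\alpha^A_a(x_0)=a$. An automorphism $\Phi$ of $\mathcal C$ is called potential-inner if there exists a family of bijections of underlying sets $s_A:A\to\Phi(A)$, one for each object $A$ of $\mathcal C$, such that $\Phi(\mu)=s_B\circ\mu\circ s_A^{-1}$ for every morphism $\mu:A\to B$ of $\mathcal C$. Equivalently, $\Phi$ is the restriction of an inner automorphism of some category that has the same objects as $\mathcal C$, whose morphisms are maps between underlying sets, and which contains $\mathcal C$. *)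

From mathcomp Require Import all_boot.
Set Implicit Arguments. Unset Strict Implicit. Unset Printing Implicit Defensive.

Section UA.
Variable Op : Type.
Variable arity : Op -> nat.

Record algebra := Algebra {
  carrier :> Type;
  op : forall o : Op, ('I_(arity o) -> carrier) -> carrier }.

Inductive term : Type :=
  | Var : nat -> term
  | App : forall o : Op, ('I_(arity o) -> term) -> term.

Fixpoint eval (A : algebra) (v : nat -> A) (t : term) : A :=
  match t with
  | Var n => v n
  | App o ts => op (fun i => eval v (ts i))
  end.

Definition in_variety (E : term -> term -> Prop) (A : algebra) : Prop :=
  forall s t, E s t -> forall v : nat -> A, eval v s = eval v t.

Definition is_hom (A B : algebra) (f : A -> B) : Prop :=
  forall (o : Op) (xs : 'I_(arity o) -> A), f (op xs) = op (fun i => f (xs i)).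

Definition is_iso (A B : algebra) (f : A -> B) : Prop :=
  is_hom f /\ exists g : B -> A, is_hom g /\ cancel f g /\ cancel g f.

Definition isomorphic (A B : algebra) : Prop := exists f : A -> B, is_iso f.

Definition free_on (E : term -> term -> Prop) (F : algebra) (X : F -> Prop) : Prop :=
  in_variety E F /\
  forall B : algebra, in_variety E B ->
  forall f : forall x : F, X x -> B,
    (exists h : F -> B, is_hom h /\ forall x (Hx : X x), h x = f x Hx) /\
    (forall h1 h2 : F -> B, is_hom h1 -> is_hom h2 ->
       (forall x, X x -> h1 x = h2 x) -> forall y, h1 y = h2 y).

(* Objects of a full subcategory C of Theta(V), given by a class Cobj of algebras;
   morphisms A -> B are all homomorphisms (compared extensionally). *)
Definition ob (Cobj : algebra -> Prop) := {A : algebra | Cobj A}.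

Record automorphism (Cobj : algebra -> Prop) (PhiO : ob Cobj -> ob Cobj)
    (PhiM : forall A B : ob Cobj,
        (sval A -> sval B) -> (sval (PhiO A) -> sval (PhiO B))) : Prop := {
  aut_hom : forall (A B : ob Cobj) (f : sval A -> sval B), is_hom f -> is_hom (PhiM A B f);
  aut_id : forall (A : ob Cobj) (x : sval (PhiO A)), PhiM A A id x = x;
  aut_comp : forall (A B C : ob Cobj) (f : sval A -> sval B) (g : sval B -> sval C),
      is_hom f -> is_hom g ->
      forall x, PhiM A C (g \o f) x = PhiM B C g (PhiM A B f x);
  aut_ob_bij : bijective PhiO;
  aut_faithful : forall (A B : ob Cobj) (f g : sval A -> sval B), is_hom f -> is_hom g ->
      (forall x, PhiM A B f x = PhiM A B g x) -> forall x, f x = g x;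
  aut_full : forall (A B : ob Cobj) (h : sval (PhiO A) -> sval (PhiO B)), is_hom h ->
      exists f : sval A -> sval B, is_hom f /\ forall x, PhiM A B f x = h x }.

Definition potential_inner_witness (Cobj : algebra -> Prop) (PhiO : ob Cobj -> ob Cobj)
    (PhiM : forall A B : ob Cobj,
        (sval A -> sval B) -> (sval (PhiO A) -> sval (PhiO B)))
    (s : forall A : ob Cobj, sval A -> sval (PhiO A))
    (sinv : forall A : ob Cobj, sval (PhiO A) -> sval A) : Prop :=
  (forall A : ob Cobj, cancel (s A) (sinv A) /\ cancel (sinv A) (s A)) /\
  (forall (A B : ob Cobj) (mu : sval A -> sval B), is_hom mu ->
     forall y, PhiM A B mu y = s B (mu (sinv A y))).

Definition potential_inner (Cobj : algebra -> Prop) (PhiO : ob Cobj -> ob Cobj)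
    (PhiM : forall A B : ob Cobj,
        (sval A -> sval B) -> (sval (PhiO A) -> sval (PhiO B))) : Prop :=
  exists s sinv, @potential_inner_witness Cobj PhiO PhiM s sinv.

End UA.
Arguments free_on {Op arity} E F X.
Arguments isomorphic {Op arity} A B.
Arguments in_variety {Op arity} E A.

(* (ii) If F = Phi(A), the homomorphism h : F -> A with h x = s_A^-1 x on the
   basis is carried by Phi to a homomorphism tau = s_A o h o s_F^-1 : Phi(F) -> F
   with tau (s_F x) = x, so tau o sigma = id by freeness.  Conversely, by
   fullness the conjugate s_F^-1 o (sigma o tau) o s_F is a homomorphism of F
   fixing the basis, hence the identity, and sigma o tau = id.
   (i) If Phi(A0) is isomorphic to A0, it is free on one generator y0, and one
   puts s_A a := Phi(alpha_a) y0 and s_A^-1 b := beta x0 for any homomorphism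
   beta : A0 -> A with Phi(beta) y0 = b (one exists by fullness).  Since
   homomorphisms out of A0 and Phi(A0) are determined by the image of the
   generator, faithfulness makes these maps mutually inverse, and
   Phi(mu) (Phi(alpha_a) y0) = Phi(mu o alpha_a) y0 = Phi(alpha_(mu a)) y0
   gives naturality. *)
From mathcomp Require Import all_boot.
From Stdlib Require Import ProofIrrelevance FunctionalExtensionality
  IndefiniteDescription.
Set Implicit Arguments. Unset Strict Implicit.

Section FreeAlgebras.
Variables (Op : Type) (arity : Op -> nat) (E : term arity -> term arity -> Prop).

Lemma hom_comp (A B C : algebra arity) (f : A -> B) (g : B -> C) :
  is_hom f -> is_hom g -> is_hom (g \o f).
Proof. by move=> Hf Hg o xs; rewrite /= Hf Hg. Qed.

Lemma iso_isomorphicV (A B : algebra arity) (f : A -> B) :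
  is_iso f -> isomorphic B A.
Proof. by case=> Hf [g [Hg [fK gK]]]; exists g; split=> //; exists f. Qed.

Lemma free_hom_exists (F B : algebra arity) (X : F -> Prop) (f : F -> B) :
  free_on E F X -> in_variety E B ->
  exists h : F -> B, is_hom h /\ forall x, X x -> h x = f x.
Proof.
move=> [_ Hfree] HB; have [[h [Hh Hhx]] _] := Hfree B HB (fun x _ => f x).
by exists h; split=> // x; apply: Hhx.
Qed.

Lemma free_hom_ext (F B : algebra arity) (X : F -> Prop) (h1 h2 : F -> B) :
  free_on E F X -> in_variety E B -> is_hom h1 -> is_hom h2 ->
  (forall x, X x -> h1 x = h2 x) -> h1 =1 h2.
Proof. by move=> [_ Hfree] HB; apply: (proj2 (Hfree B HB (fun x _ => h1 x))). Qed.

Lemma free_on_iso (F G : algebra arity) (X : F -> Prop) (Y : G -> Prop)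
    (sigma : F -> G) (tau : G -> F) :
  is_hom sigma -> is_hom tau -> cancel sigma tau -> cancel tau sigma ->
  in_variety E G -> free_on E F X ->
  (forall y, Y y <-> exists2 x, X x & y = sigma x) ->
  free_on E G Y.
Proof.
move=> Hs Ht sK tK HG [HF Hfree] HY; split=> // B HB f.
have HYs x : X x -> Y (sigma x) by move=> Hx; apply/HY; exists x.
have [[h [Hh Hhx]] _] := Hfree B HB (fun x Hx => f (sigma x) (HYs x Hx)).
split.
  exists (h \o tau); split; first exact: hom_comp.
  move=> y Hy; have [x Hx exy] := proj1 (HY y) Hy.
  by subst y => /=; rewrite sK Hhx; congr f; apply: proof_irrelevance.
move=> h1 h2 H1 H2 e y; rewrite -[y]tK.
apply: (free_hom_ext (conj HF Hfree) HB (hom_comp Hs H1) (hom_comp Hs H2)).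
by move=> x Hx; apply/e/HYs.
Qed.

End FreeAlgebras.

Section Automorphism.
Variables (Op : Type) (arity : Op -> nat) (E : term arity -> term arity -> Prop)
  (Cobj : algebra arity -> Prop).
Hypothesis HC : forall A, Cobj A -> in_variety E A.
Variables (PhiO : ob Cobj -> ob Cobj)
  (PhiM : forall A B : ob Cobj,
      (sval A -> sval B) -> (sval (PhiO A) -> sval (PhiO B))).
Arguments PhiM {A B}.
Hypothesis HPhi : automorphism (@PhiM).

Lemma ob_in_variety (A : ob Cobj) : in_variety E (sval A).
Proof. exact: HC (proj2_sig A). Qed.
Arguments ob_in_variety : clear implicits.

Section Witness.
Variables (s : forall A : ob Cobj, sval A -> sval (PhiO A))
  (sinv : forall A : ob Cobj, sval (PhiO A) -> sval A).
Arguments s : clear implicits.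
Arguments sinv : clear implicits.
Hypothesis Hs : potential_inner_witness (@PhiM) s sinv.

Lemma witness_sK (A : ob Cobj) : cancel (s A) (sinv A).
Proof. exact: (proj1 (proj1 Hs A)). Qed.

Lemma witness_sinvK (A : ob Cobj) : cancel (sinv A) (s A).
Proof. exact: (proj2 (proj1 Hs A)). Qed.

Lemma PhiM_witness (A B : ob Cobj) (mu : sval A -> sval B) :
  is_hom mu -> PhiM mu = s B \o mu \o sinv A.
Proof. by move=> Hmu; apply: functional_extensionality; apply: (proj2 Hs). Qed.

Lemma hom_conj_witness (A B : ob Cobj) (mu : sval A -> sval B) :
  is_hom mu -> is_hom (s B \o mu \o sinv A).
Proof. by move=> Hmu; rewrite -PhiM_witness //; apply: (aut_hom HPhi). Qed.

Lemma hom_unconj_witness (A B : ob Cobj) (h : sval (PhiO A) -> sval (PhiO B)) :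
  is_hom h -> is_hom (sinv B \o h \o s A).
Proof.
move=> Hh; have [f [Hf Hfh]] := aut_full HPhi Hh.
suff <- : f = sinv B \o h \o s A by [].
apply: functional_extensionality => a /=.
by rewrite -Hfh PhiM_witness //= witness_sK witness_sK.
Qed.

Lemma witness_free_retraction (F : ob Cobj) (X : sval F -> Prop) :
  free_on E (sval F) X ->
  exists tau : sval (PhiO F) -> sval F, is_hom tau /\ forall x, X x -> tau (s F x) = x.
Proof.
move=> HF; have [g _ gK] := aut_ob_bij HPhi.
rewrite -(gK F) in X HF *; set A := g F.
have [h [Hh Hhx]] := free_hom_exists (sinv A) HF (ob_in_variety A).
exists (s A \o h \o sinv (PhiO A)); split; first exact: hom_conj_witness.
by move=> x Hx /=; rewrite witness_sK Hhx // witness_sinvK.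
Qed.

Lemma witness_free_iso (F : ob Cobj) (X : sval F -> Prop)
    (sigma : sval F -> sval (PhiO F)) :
  free_on E (sval F) X -> is_hom sigma -> (forall x, X x -> sigma x = s F x) ->
  is_iso sigma.
Proof.
move=> HF Hsigma Hsx; have [tau [Htau Htx]] := witness_free_retraction HF.
have sigmaK : cancel sigma tau.
  apply: (free_hom_ext HF (ob_in_variety F) (hom_comp Hsigma Htau)) => // x Hx.
  by rewrite /= Hsx // Htx.
have Hk := hom_unconj_witness (hom_comp Htau Hsigma).
have k_id : sinv F \o (sigma \o tau) \o s F =1 id.
  apply: (free_hom_ext HF (ob_in_variety F) Hk) => // x Hx.
  by rewrite /= Htx // Hsx // witness_sK.
split=> //; exists tau; split=> //; split=> // y.
rewrite -[RHS]witness_sinvK -[LHS]witness_sinvK; congr (s F _).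
by have := k_id (sinv F y); rewrite /= witness_sinvK.
Qed.

Lemma witness_free_image (F : ob Cobj) (X : sval F -> Prop) :
  free_on E (sval F) X ->
  isomorphic (sval (PhiO F)) (sval F) /\
  (exists sigma : sval F -> sval (PhiO F),
     is_hom sigma /\ forall x, X x -> sigma x = s F x) /\
  (forall sigma : sval F -> sval (PhiO F),
     is_hom sigma -> (forall x, X x -> sigma x = s F x) -> is_iso sigma) /\
  free_on E (sval (PhiO F)) (fun y => exists2 x, X x & y = s F x).
Proof.
move=> HF; have [sigma [Hsigma Hsx]] := free_hom_exists (s F) HF (ob_in_variety _).
have Hiso := witness_free_iso HF Hsigma Hsx.
split; first exact: iso_isomorphicV Hiso.
split; first by exists sigma.
split; first by move=> *; apply: (witness_free_iso HF).
have [_ [tau [Htau [sigmaK tauK]]]] := Hiso.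
apply: (free_on_iso Hsigma Htau sigmaK tauK (ob_in_variety _) HF) => y.
by split=> -[x Hx ->]; exists x; rewrite ?Hsx.
Qed.

End Witness.

Section FreeOnOneGenerator.
Variables (A0 : ob Cobj) (x0 : sval A0) (y0 : sval (PhiO A0)).
Hypotheses (HA0 : free_on E (sval A0) (fun x => x = x0))
  (HY : free_on E (sval (PhiO A0)) (fun y => y = y0)).

Lemma free1_hom_ext (A : ob Cobj) (f g : sval A0 -> sval A) :
  is_hom f -> is_hom g -> f x0 = g x0 -> f = g.
Proof.
move=> Hf Hg e; apply: functional_extensionality.
by apply: (free_hom_ext HA0 (ob_in_variety A)) => // x ->.
Qed.

Lemma PhiM_y0_inj (A : ob Cobj) (f g : sval A0 -> sval A) :
  is_hom f -> is_hom g -> PhiM f y0 = PhiM g y0 -> f x0 = g x0.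
Proof.
move=> Hf Hg e; apply: (aut_faithful HPhi Hf Hg).
have HPhif := aut_hom HPhi Hf; have HPhig := aut_hom HPhi Hg.
by apply: (free_hom_ext HY (ob_in_variety _) HPhif HPhig) => y ->.
Qed.

Lemma exists_hom_at_x0 (A : ob Cobj) (a : sval A) :
  exists f : sval A0 -> sval A, is_hom f /\ f x0 = a.
Proof.
have [f [Hf Hfx]] := free_hom_exists (fun=> a) HA0 (ob_in_variety A).
by exists f; split=> //; apply: Hfx.
Qed.

Lemma exists_hom_PhiM_at_y0 (A : ob Cobj) (b : sval (PhiO A)) :
  exists f : sval A0 -> sval A, is_hom f /\ PhiM f y0 = b.
Proof.
have [h [Hh Hhy]] := free_hom_exists (fun=> b) HY (ob_in_variety _).
have [f [Hf Hfh]] := aut_full HPhi Hh.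
by exists f; split=> //; rewrite Hfh; apply: Hhy.
Qed.

Definition hom_at_x0 (A : ob Cobj) (a : sval A) : sval A0 -> sval A :=
  proj1_sig (constructive_indefinite_description _ (exists_hom_at_x0 a)).

Definition hom_PhiM_at_y0 (A : ob Cobj) (b : sval (PhiO A)) : sval A0 -> sval A :=
  proj1_sig (constructive_indefinite_description _ (exists_hom_PhiM_at_y0 b)).

Lemma hom_at_x0P (A : ob Cobj) (a : sval A) :
  is_hom (hom_at_x0 a) /\ hom_at_x0 a x0 = a.
Proof. by rewrite /hom_at_x0; case: constructive_indefinite_description. Qed.

Lemma hom_PhiM_at_y0P (A : ob Cobj) (b : sval (PhiO A)) :
  is_hom (hom_PhiM_at_y0 b) /\ PhiM (hom_PhiM_at_y0 b) y0 = b.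
Proof. by rewrite /hom_PhiM_at_y0; case: constructive_indefinite_description. Qed.

Definition s1 (A : ob Cobj) (a : sval A) : sval (PhiO A) := PhiM (hom_at_x0 a) y0.

Definition s1inv (A : ob Cobj) (b : sval (PhiO A)) : sval A := hom_PhiM_at_y0 b x0.

Arguments s1 : clear implicits.
Arguments s1inv : clear implicits.

Lemma s1K (A : ob Cobj) : cancel (s1 A) (s1inv A).
Proof.
move=> a; have [Hf Hfy] := hom_PhiM_at_y0P (s1 A a); have [Ha Hax] := hom_at_x0P a.
by rewrite /s1inv -[RHS]Hax; apply: PhiM_y0_inj.
Qed.

Lemma s1invK (A : ob Cobj) : cancel (s1inv A) (s1 A).
Proof.
move=> b; have [Hf Hfy] := hom_PhiM_at_y0P b.
have [Ha Hax] := hom_at_x0P (s1inv A b).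
by rewrite /s1 (free1_hom_ext Ha Hf Hax).
Qed.

Lemma PhiM_s1 (A B : ob Cobj) (mu : sval A -> sval B) (a : sval A) :
  is_hom mu -> PhiM mu (s1 A a) = s1 B (mu a).
Proof.
move=> Hmu; have [Ha Hax] := hom_at_x0P a; have [Hb Hbx] := hom_at_x0P (mu a).
rewrite /s1 -(aut_comp HPhi Ha Hmu).
by rewrite (free1_hom_ext (hom_comp Ha Hmu) Hb) //= Hax Hbx.
Qed.

Lemma free1_potential_inner_witness : potential_inner_witness (@PhiM) s1 s1inv.
Proof.
split=> [A | A B mu Hmu y]; first by split; [apply: s1K | apply: s1invK].
by rewrite -{1}[y]s1invK PhiM_s1.
Qed.

End FreeOnOneGenerator.

Lemma potential_inner_of_isomorphic (A0 : ob Cobj) (x0 : sval A0) :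
  free_on E (sval A0) (fun x => x = x0) ->
  isomorphic (sval (PhiO A0)) (sval A0) -> potential_inner (@PhiM).
Proof.
move=> HA0 [phi [Hphi [psi [Hpsi [phiK psiK]]]]].
have HY : free_on E (sval (PhiO A0)) (fun y => y = psi x0).
  apply: (free_on_iso Hpsi Hphi psiK phiK (ob_in_variety _) HA0) => y.
  by split=> [-> | [x -> ->]]; first exists x0.
by do 2!eexists; exact: free1_potential_inner_witness HA0 HY.
Qed.

End Automorphism.

Theorem mainTheorem1
  (Op : Type) (arity : Op -> nat) (E : term arity -> term arity -> Prop)
  (Cobj : algebra arity -> Prop)
  (HC : forall A, Cobj A -> in_variety E A)
  (A0 : ob Cobj) (x0 : sval A0) (HA0 : free_on E (sval A0) (fun x => x = x0))
  (PhiO : ob Cobj -> ob Cobj)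
  (PhiM : forall A B : ob Cobj,
      (sval A -> sval B) -> (sval (PhiO A) -> sval (PhiO B)))
  (HPhi : automorphism PhiM) :
  (potential_inner PhiM <-> isomorphic (sval (PhiO A0)) (sval A0)) /\
  (forall (s : forall A : ob Cobj, sval A -> sval (PhiO A))
          (sinv : forall A : ob Cobj, sval (PhiO A) -> sval A),
     potential_inner_witness PhiM s sinv ->
     forall (F : ob Cobj) (X : sval F -> Prop), free_on E (sval F) X ->
       isomorphic (sval (PhiO F)) (sval F) /\
       (exists sigma : sval F -> sval (PhiO F),
          is_hom sigma /\ forall x, X x -> sigma x = s F x) /\
       (forall sigma : sval F -> sval (PhiO F),
          is_hom sigma -> (forall x, X x -> sigma x = s F x) -> is_iso sigma) /\
       free_on E (sval (PhiO F)) (fun y => exists2 x, X x & y = s F x)).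
Proof.
have part_ii := witness_free_image HC HPhi.
split; last exact: part_ii.
split; last exact: potential_inner_of_isomorphic HA0.
by case=> s [sinv Hs]; case: (part_ii s sinv Hs _ _ HA0).
Qed.
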